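(* For a Frobenius array $\mu \in \mathcal{F}(\beta)$, the array $\gamma$ constructed from $\mu$ is an $S_{\beta}$-partition, i.e., the entries of $\gamma$ in each row are (weakly) decreasing and the entries in each column are (weakly) decreasing. In addition, the entries in each column of $\gamma$ that came from the positive blocks of $\mu$ are strictly decreasing.
   Context: Let $\beta=(b_1,\ldots,b_m)$ be a composition of $d$ and set $r_i=b_1+\cdots+b_i$ ($r_0=0$). The poset $S_\beta$ is $\bigcup_{l=1}^{m}\{(i,j): l\le i\le l+1,\ r_{l-1}+1\le j\le r_l\}$ with $(i_1,j_1)\le(i_2,j_2)$ iff $i_1\le i_2$ and $j_1\le j_2$; it carries the natural labeling $\nu(i,j)=r_{l-1}+j+(i-l)b_l$ (where $r_{l-1}+1\le j\le r_l$), so an $S_\beta$-partition is an order-reversing map $S_\beta\to\mathbb{N}$ (nonnegative integers). A Frobenius symbol with $d$ columns is a two-rowed array $\left(\begin{smallmatrix}x_1&\cdots&x_d\\ y_1&\cdots&y_d\end{smallmatrix}\right)$ with $x_1>\cdots>x_d\ge0$, $y_1>\cdots>y_d\ge0$; a column is positive if $x_i-y_i\ge1$ and negative if $x_i-y_i\le0$; parity blocks are maximal sets of contiguous columns of the same parity. Subtracting $d-1,d-2,\ldots,0$ from the entries of columns $1,\ldots,d$ in each row gives a Frobenius array $\mu$ (rows weakly decreasing, column parities unchanged). $\mathcal{F}(\beta)$ is the set of Frobenius arrays with $d$ columns and $m$ parity blocks $B_1,\ldots,B_m$, where $B_m$ is positive and $B_i$ has $b_i$ columns. From $\mu\in\mathcal{F}(\beta)$,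 $\gamma$ is built as follows: interchange the top and bottom entries in every column of each negative block to get $\hat\mu$; then place the $(i,j)$-th entry $\hat\mu_{i,j}$ ($i\in\{1,2\}$) at position $(i+l,j)$ of $S_\beta$, where $r_l<j\le r_{l+1}$. *)

(* All indices are 1-based natural numbers, as in the paper. *)
From mathcomp Require Import all_boot.
Set Implicit Arguments. Unset Strict Implicit. Unset Printing Implicit Defensive.

Definition composition (d : nat) (beta : seq nat) : bool :=
  all (fun b => 0 < b) beta && (sumn beta == d).

Definition rsum (beta : seq nat) (i : nat) : nat := sumn (take i beta).

Definition block_cols (beta : seq nat) (l : nat) : seq nat :=
  iota (rsum beta l.-1).+1 (nth 0 beta l.-1).

Definition blk (beta : seq nat) (j : nat) : nat :=
  (find (fun l => j <= rsum beta l) (iota 1 (size beta))).+1.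

(* A Frobenius array with d columns: two rows (x = top, y = bottom) of
   nonnegative integers, indexed by columns 1..d, each row weakly decreasing. *)
Definition frobenius_array (d : nat) (x y : nat -> nat) : Prop :=
  forall j, 1 <= j -> j < d -> x j.+1 <= x j /\ y j.+1 <= y j.

Definition col_pos (x y : nat -> nat) (j : nat) : bool := y j < x j.

Definition block_pos (beta : seq nat) (x y : nat -> nat) (l : nat) : bool :=
  all (col_pos x y) (block_cols beta l).
Definition block_neg (beta : seq nat) (x y : nat -> nat) (l : nat) : bool :=
  all (fun j => ~~ col_pos x y j) (block_cols beta l).

(* mu in F(beta): the parity blocks (maximal runs of columns of equal parity)
   are exactly B_1, ..., B_m with |B_l| = b_l, and B_m is positive. *)
Definition in_F (d : nat) (beta : seq nat) (x y : nat -> nat) : Prop :=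
  frobenius_array d x y /\
  (forall l, 1 <= l <= size beta -> block_pos beta x y l || block_neg beta x y l) /\
  (forall l, 1 <= l < size beta ->
     (block_pos beta x y l && block_neg beta x y l.+1) ||
     (block_neg beta x y l && block_pos beta x y l.+1)) /\
  (0 < size beta -> block_pos beta x y (size beta)).

(* hat mu: top and bottom entries interchanged in every column of each
   negative block.  i = 1 is the top row, i = 2 the bottom row. *)
Definition hatmu (beta : seq nat) (x y : nat -> nat) (i j : nat) : nat :=
  if block_neg beta x y (blk beta j)
  then (if i == 1 then y j else x j)
  else (if i == 1 then x j else y j).

(* gamma: hatmu_{i,j} is placed at position (i + l, j) of S_beta, where
   r_l < j <= r_{l+1}; i.e. for j in block L = l+1, gamma(L, j) = hatmu_{1,j}
   and gamma(L+1, j) = hatmu_{2,j}. *)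
Definition gamma (beta : seq nat) (x y : nat -> nat) (i j : nat) : nat :=
  hatmu beta x y (i.+1 - blk beta j) j.

Definition inS (beta : seq nat) (i j : nat) : bool :=
  has (fun l => (l <= i <= l.+1) && (j \in block_cols beta l)) (iota 1 (size beta)).

(* an S_beta-partition: an order-reversing map S_beta -> N for the product
   order (natural labeling, so no strictness is imposed). *)
Definition S_partition (beta : seq nat) (g : nat -> nat -> nat) : Prop :=
  forall i1 j1 i2 j2, inS beta i1 j1 -> inS beta i2 j2 ->
    i1 <= i2 -> j1 <= j2 -> g i2 j2 <= g i1 j1.

From mathcomp Require Import all_boot.
From mathcomp Require Import zify.

Set Implicit Arguments.
Unset Strict Implicit.
Unset Printing Implicit Defensive.

(* Flipping the negative columns (where x_j <= y_j) puts max(x_j, y_j) in the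
   upper and min(x_j, y_j) in the lower cell of column j of gamma, so within a
   block the rows of gamma decrease because x and y do, and the columns
   decrease, strictly in positive blocks.  Across blocks, parity alternates:
   if B_l is positive and B_(l+1) negative, then for j in B_l and k in B_(l+1)
   max(x_k, y_k) = y_k <= y_j = min(x_j, y_j), and symmetrically with x.
   Hence every entry of a later block lies below every entry of an earlier one. *)

Section PrefixSums.
Variable beta : seq nat.

Lemma rsum_mono : {homo rsum beta : i k / i <= k}.
Proof.
rewrite /rsum; elim: beta => [|b s IH] [|i] [|k] //= le_ik.
by rewrite leq_add2l IH.
Qed.

Lemma rsumS l : l < size beta -> rsum beta l.+1 = rsum beta l + nth 0 beta l.
Proof. by move=> lt_l; rewrite /rsum (take_nth 0 lt_l) sumn_rcons. Qed.

Lemma rsum_le_sumn l : rsum beta l <= sumn beta.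
Proof. by rewrite /rsum -[in X in _ <= X](cat_take_drop l beta) sumn_cat leq_addr. Qed.

Lemma mem_block_cols l j : 0 < l <= size beta ->
  (j \in block_cols beta l) = (rsum beta l.-1 < j <= rsum beta l).
Proof.
by case: l => [|l] //= lt_l; rewrite mem_iota rsumS // -addSn ltnS.
Qed.

Lemma blk_block_cols l j : 0 < l <= size beta -> j \in block_cols beta l ->
  blk beta j = l.
Proof.
move=> l_range; rewrite mem_block_cols // => /andP [lt_j le_j].
have size_split : size beta = l.-1 + (size beta - l.-1) by lia.
rewrite /blk size_split iotaD find_cat size_iota.
have -> : has (fun k => j <= rsum beta k) (iota 1 l.-1) = false.
  apply/hasPn => k; rewrite mem_iota -ltnNge => /andP [_ lt_k].
  by apply: leq_ltn_trans lt_j; apply: rsum_mono; lia.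
have -> : size beta - l.-1 = (size beta - l).+1 by lia.
by rewrite /= (_ : 1 + l.-1 = l) ?le_j ?addn0 //; lia.
Qed.

Lemma block_cols_homo l1 l2 j1 j2 :
  0 < l1 <= size beta -> 0 < l2 <= size beta ->
  j1 \in block_cols beta l1 -> j2 \in block_cols beta l2 -> j1 <= j2 -> l1 <= l2.
Proof.
move=> l1_range l2_range; rewrite !mem_block_cols // => /andP [lt_j1 _] /andP [_ le_j2].
move=> le_j12; rewrite leqNgt; apply/negP => lt_l21.
have := @rsum_mono l2 l1.-1 ltac:(lia); lia.
Qed.

Lemma block_cols_bounds l j : 0 < l <= size beta -> j \in block_cols beta l ->
  0 < j <= sumn beta.
Proof.
move=> l_range; rewrite mem_block_cols // => /andP [lt_j le_j].
by rewrite (leq_ltn_trans _ lt_j) // (leq_trans le_j) ?rsum_le_sumn.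
Qed.

End PrefixSums.

Section Gamma.
Variables (beta : seq nat) (x y : nat -> nat).

Definition colmax (j : nat) : nat := maxn (x j) (y j).
Definition colmin (j : nat) : nat := minn (x j) (y j).

Lemma gamma_block l j :
  0 < l <= size beta -> block_pos beta x y l || block_neg beta x y l ->
  j \in block_cols beta l ->
  gamma beta x y l j = colmax j /\ gamma beta x y l.+1 j = colmin j.
Proof.
move=> l_range sign_l j_l.
rewrite /gamma /hatmu (blk_block_cols l_range j_l) !subSn // subnn /=.
case/orP: sign_l => [pos_l | neg_l].
- have := allP pos_l j j_l; rewrite /col_pos => lt_yx.
  case: ifP => [/allP/(_ j j_l)|_]; rewrite /col_pos /colmax /colmin; lia.
- have := allP neg_l j j_l; rewrite /col_pos -leqNgt neg_l => le_xy.
  rewrite /colmax /colmin; lia.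
Qed.

Lemma gamma_between l i j :
  0 < l <= size beta -> block_pos beta x y l || block_neg beta x y l ->
  l <= i <= l.+1 -> j \in block_cols beta l ->
  colmin j <= gamma beta x y i j <= colmax j.
Proof.
move=> l_range sign_l i_range j_l; have [top bot] := gamma_block l_range sign_l j_l.
have [-> | ->] : i = l \/ i = l.+1 by lia.
all: by rewrite ?top ?bot /colmin /colmax; lia.
Qed.

Lemma gamma_pos_block_lt l j : 0 < l <= size beta -> block_pos beta x y l ->
  j \in block_cols beta l -> gamma beta x y l.+1 j < gamma beta x y l j.
Proof.
move=> l_range pos_l j_l.
have sign_l : block_pos beta x y l || block_neg beta x y l by rewrite pos_l.
have [-> ->] := gamma_block l_range sign_l j_l.
by have := allP pos_l j j_l; rewrite /col_pos /colmax /colmin; lia.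
Qed.

Variable d : nat.
Hypothesis frob : frobenius_array d x y.

Lemma frobenius_array_nonincr i j : 0 < i <= j -> j <= d ->
  x j <= x i /\ y j <= y i.
Proof.
case/andP=> i_gt0; elim: j => [|j IH]; first by rewrite leqn0 => /eqP i0; lia.
rewrite leq_eqVlt ltnS => /predU1P [<- //| le_ij] lt_jd.
have [] := IH le_ij (ltnW lt_jd); have [] := frob (leq_trans i_gt0 le_ij) lt_jd; lia.
Qed.

Lemma colmax_nonincr i j : 0 < i <= j -> j <= d -> colmax j <= colmax i.
Proof.
by move=> le_ij le_jd; have [] := frobenius_array_nonincr le_ij le_jd; rewrite /colmax; lia.
Qed.

Lemma colmin_nonincr i j : 0 < i <= j -> j <= d -> colmin j <= colmin i.
Proof.
by move=> le_ij le_jd; have [] := frobenius_array_nonincr le_ij le_jd; rewrite /colmin; lia.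
Qed.

Lemma colmax_next_block_le_colmin l j k : 0 < l < size beta ->
  (block_pos beta x y l && block_neg beta x y l.+1) ||
  (block_neg beta x y l && block_pos beta x y l.+1) ->
  j \in block_cols beta l -> k \in block_cols beta l.+1 -> k <= d ->
  colmax k <= colmin j.
Proof.
move=> /andP [l_gt0 lt_l] alt_l j_l k_Sl le_kd.
have /andP [lt_j le_j] : rsum beta l.-1 < j <= rsum beta l.
  by move: j_l; rewrite mem_block_cols // l_gt0 ltnW.
have /andP [lt_k _] : rsum beta l < k <= rsum beta l.+1.
  by move: k_Sl; rewrite mem_block_cols.
have [le_xkj le_ykj] := @frobenius_array_nonincr j k ltac:(lia) le_kd.
rewrite /colmax /colmin.
case/orP: alt_l => /andP [/allP/(_ j j_l) sign_j /allP/(_ k k_Sl) sign_k];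
  move: sign_j sign_k; rewrite /col_pos; lia.
Qed.

Hypothesis beta_d : composition d beta.
Hypothesis alternating : forall l, 0 < l < size beta ->
  (block_pos beta x y l && block_neg beta x y l.+1) ||
  (block_neg beta x y l && block_pos beta x y l.+1).

Lemma colmax_later_block_le_colmin l1 l2 j1 j2 : 0 < l1 < l2 -> l2 <= size beta ->
  j1 \in block_cols beta l1 -> j2 \in block_cols beta l2 -> colmax j2 <= colmin j1.
Proof.
move=> /andP [l1_gt0 lt_l12] le_l2 j1_l1 j2_l2.
have /andP [beta_pos /eqP sum_beta] := beta_d.
have l1_range : 0 < l1 < size beta by rewrite l1_gt0 (leq_trans lt_l12).
have l2_range : 0 < l2 <= size beta by rewrite le_l2 andbT (leq_ltn_trans _ lt_l12).
have k_Sl1 : (rsum beta l1).+1 \in block_cols beta l1.+1.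
  have nth_pos : 0 < nth 0 beta l1.
    by apply/(allP beta_pos)/mem_nth; case/andP: l1_range.
  by rewrite (@mem_block_cols beta l1.+1) /= ?rsumS; lia.
have le_k_j2 : 0 < (rsum beta l1).+1 <= j2.
  move: j2_l2; rewrite mem_block_cols // => /andP [lt_j2 _].
  by have := @rsum_mono beta l1 l2.-1 ltac:(lia); lia.
have le_j2_d : j2 <= d.
  by rewrite -sum_beta; case/andP: (block_cols_bounds l2_range j2_l2).
apply: leq_trans (colmax_nonincr le_k_j2 le_j2_d) _.
apply: (colmax_next_block_le_colmin l1_range (alternating l1_range) j1_l1 k_Sl1).
exact: leq_trans le_k_j2 le_j2_d.
Qed.

Hypothesis signed : forall l, 0 < l <= size beta ->
  block_pos beta x y l || block_neg beta x y l.

Lemma gamma_S_partition : S_partition beta (gamma beta x y).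
Proof.
move=> i1 j1 i2 j2 /hasP [l1 + /andP [i1_range j1_l1]] /hasP [l2 + /andP [i2_range j2_l2]].
rewrite !mem_iota add1n !ltnS => l1_range l2_range le_i12 le_j12.
have /andP [_ le_gamma2] := gamma_between l2_range (signed l2_range) i2_range j2_l2.
have /andP [ge_gamma1 _] := gamma_between l1_range (signed l1_range) i1_range j1_l1.
have := block_cols_homo l1_range l2_range j1_l1 j2_l2 le_j12.
rewrite leq_eqVlt => /predU1P [eq_l12 | lt_l12]; last first.
  apply: leq_trans le_gamma2 (leq_trans _ ge_gamma1).
  apply: colmax_later_block_le_colmin j1_l1 j2_l2; case/andP: l2_range; lia.
subst l2.
have [top1 bot1] := gamma_block l1_range (signed l1_range) j1_l1.
have [_ bot2] := gamma_block l1_range (signed l1_range) j2_l2.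
have /andP [j1_pos _] := block_cols_bounds l1_range j1_l1.
have /andP [_ j2_le] := block_cols_bounds l1_range j2_l2.
have /andP [_ /eqP sum_beta] := beta_d; rewrite sum_beta in j2_le.
have j12_range : 0 < j1 <= j2 by rewrite j1_pos.
have [-> | i1_eq] : i1 = l1 \/ i1 = l1.+1 by lia.
  by rewrite top1 (leq_trans le_gamma2) ?(colmax_nonincr j12_range j2_le).
have -> : i2 = l1.+1 by lia.
by rewrite i1_eq bot1 bot2 (colmin_nonincr j12_range j2_le).
Qed.

End Gamma.

Theorem lemma4p2 (d : nat) (beta : seq nat) (x y : nat -> nat) :
  composition d beta -> in_F d beta x y ->
  S_partition beta (gamma beta x y) /\
  (forall l j, 1 <= l <= size beta -> block_pos beta x y l ->
     j \in block_cols beta l -> gamma beta x y l.+1 j < gamma beta x y l j).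
Proof.
move=> beta_d [frob [signed [alternating _]]]; split.
  exact: gamma_S_partition frob beta_d alternating signed.
by move=> l j; apply: gamma_pos_block_lt.
Qed.
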